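(* Let $(G,v)$ be an independent Hamel space over an ordered field $C$. Then for all $x_0,y_0,x_1,y_1\in G$ with $x_0<_0y_0$ and $x_1<_1y_1$ there is $z\in G$ such that $z\neq v(z)$, $x_0<_0z<_0y_0$ and $x_1<_1z<_1y_1$.
   Context: Let $C$ be an ordered field. A $2$-ordered $C$-vector space is a $C$-vector space $G$ with two total orderings $<_0,<_1$ such that $G$ is an ordered $C$-vector space with respect to each. Put $G_\infty=G\cup\{\infty\}$, with $G<_0\infty$, $G<_1\infty$. A Hamel valuation on $G$ is a map $v:G\to G_\infty$ such that for all $x,y\in G$ and $\lambda\in C^{\times}$: $v(x)=\infty$ iff $x=0$; $v(x+y)\ge_0\min_0(v(x),v(y))$; $v(\lambda x)=v(x)$; if $0<_1x<_1y$ then $v(x)\ge_0v(y)$; $v(v(x))=v(x)$ (with $v(\infty)=\infty$); and $v(x)>_10$. A Hamel space is such a pair $(G,v)$; it is independent if for all $a_0,b_0,a_1,b_1\in G\cup\{\pm\infty\}$ with $a_0<_0b_0$, $a_1<_1b_1$ there is $z\in G$ with $a_0<_0z<_0b_0$ and $a_1<_1z<_1b_1$. *)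

From HB Require Import structures.
From mathcomp Require Import all_boot all_order all_algebra.
Set Implicit Arguments. Unset Strict Implicit. Unset Printing Implicit Defensive.
Import Order.TTheory GRing.Theory Num.Theory.
Local Open Scope ring_scope.

Section HamelDefs.
Variables (C : realFieldType) (G : lmodType C).

Definition slt (le : rel G) (x y : G) : bool := le x y && (x != y).

Definition ordered_vspace (le : rel G) : Prop :=
  [/\ reflexive le, antisymmetric le, transitive le & total le] /\
  (forall x y z : G, le x y -> le (x + z) (y + z)) /\
  (forall (c : C) (x y : G), 0 < c -> le x y -> le (c *: x) (c *: y)).

(* G_infty = G u {infty}, encoded as option G with None = infty (top) *)
Definition le_inf (le : rel G) (a b : option G) : bool :=
  match a, b with
  | _, None => true
  | None, Some _ => false
  | Some x, Some y => le x y
  end.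

Definition lt_inf (le : rel G) (a b : option G) : bool :=
  le_inf le a b && (a != b).

Definition min_inf (le : rel G) (a b : option G) : option G :=
  if le_inf le a b then a else b.

Definition vext (v : G -> option G) (a : option G) : option G :=
  match a with Some x => v x | None => None end.

Definition hamel_valuation (le0 le1 : rel G) (v : G -> option G) : Prop :=
  (forall x, v x = None <-> x = 0) /\
  (forall x y, le_inf le0 (min_inf le0 (v x) (v y)) (v (x + y))) /\
  (forall (c : C) x, c != 0 -> v (c *: x) = v x) /\
  (forall x y, slt le1 0 x -> slt le1 x y -> le_inf le0 (v y) (v x)) /\
  (forall x, vext v (v x) = v x) /\
  (forall x, lt_inf le1 (Some 0) (v x)).

Inductive extG := NegInf | Fin of G | PosInf.

Definition lt_ext (le : rel G) (a b : extG) : bool :=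
  match a, b with
  | NegInf, NegInf => false
  | NegInf, _ => true
  | Fin _, NegInf => false
  | Fin x, Fin y => slt le x y
  | Fin _, PosInf => true
  | PosInf, _ => false
  end.

Definition independent (le0 le1 : rel G) : Prop :=
  forall a0 b0 a1 b1 : extG,
    lt_ext le0 a0 b0 -> lt_ext le1 a1 b1 ->
    exists z : G, [/\ lt_ext le0 a0 (Fin z), lt_ext le0 (Fin z) b0,
                      lt_ext le1 a1 (Fin z) & lt_ext le1 (Fin z) b1].

End HamelDefs.

(* Pick z in the box.  If z is not a fixed point of v we are done; otherwise
   z = v z >_1 0, and we pick z' in the smaller box above z in both orders.
   Were z' also a fixed point, monotonicity of v would give z' = v z' <=_0 v z = z,
   contradicting z <_0 z'. *)
From HB Require Import structures.
From mathcomp Require Import all_boot all_order all_algebra.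
Set Implicit Arguments. Unset Strict Implicit. Unset Printing Implicit Defensive.
Import Order.TTheory GRing.Theory Num.Theory.
Local Open Scope ring_scope.

Section StrictOrder.
Variables (C : realFieldType) (G : lmodType C) (le : rel G).

Lemma slt_geF (x y : G) : antisymmetric le -> slt le x y -> le y x = false.
Proof.
move=> le_anti /andP[lexy /eqP nexy]; apply/negP => leyx.
by apply: nexy; apply: le_anti; rewrite lexy leyx.
Qed.

Lemma slt_trans (x y z : G) :
  antisymmetric le -> transitive le -> slt le x y -> slt le y z -> slt le x z.
Proof.
move=> le_anti le_trans /[dup] ltxy /andP[lexy _] /andP[leyz neyz].
apply/andP; split; first exact: le_trans lexy leyz.
apply/eqP => exz; subst z.
by rewrite (slt_geF le_anti ltxy) in leyz.
Qed.

End StrictOrder.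

Lemma independent_box (C : realFieldType) (G : lmodType C) (le0 le1 : rel G)
    (x0 y0 x1 y1 : G) :
  independent le0 le1 -> slt le0 x0 y0 -> slt le1 x1 y1 ->
  exists z : G, [/\ slt le0 x0 z, slt le0 z y0, slt le1 x1 z & slt le1 z y1].
Proof.
move=> ind lt0 lt1.
by have [z] := ind (Fin x0) (Fin y0) (Fin x1) (Fin y1) lt0 lt1; exists z.
Qed.

Section HamelFixedPoints.
Variables (C : realFieldType) (G : lmodType C) (le0 le1 : rel G).
Variable v : G -> option G.

Lemma hamel_fixed_gt0 (z : G) :
  hamel_valuation le0 le1 v -> v z = Some z -> slt le1 0 z.
Proof.
move=> [_ [_ [_ [_ [_ v_gt0]]]]] vz.
have := v_gt0 z; rewrite vz /lt_inf /= => /andP[le0z ne0z].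
by rewrite /slt le0z; apply: contraNN ne0z => /eqP->.
Qed.

Lemma hamel_fixed_antitone (z z' : G) :
  hamel_valuation le0 le1 v -> v z = Some z -> v z' = Some z' ->
  slt le1 z z' -> le0 z' z.
Proof.
move=> /[dup] Hv [_ [_ [_ [v_antitone _]]]] vz vz' ltzz'.
by have := v_antitone z z' (hamel_fixed_gt0 Hv vz) ltzz'; rewrite vz vz'.
Qed.

End HamelFixedPoints.

Theorem lemma4p2 (C : realFieldType) (G : lmodType C) (le0 le1 : rel G)
    (v : G -> option G)
    (Hord0 : ordered_vspace le0) (Hord1 : ordered_vspace le1)
    (Hv : hamel_valuation le0 le1 v) (Hind : independent le0 le1) :
  forall x0 y0 x1 y1 : G,
    slt le0 x0 y0 -> slt le1 x1 y1 ->
    exists z : G, [/\ Some z <> v z,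
                      slt le0 x0 z, slt le0 z y0,
                      slt le1 x1 z & slt le1 z y1].
Proof.
move: Hord0 Hord1 => [[_ anti0 trans0 _] _] [[_ anti1 trans1 _] _].
move=> x0 y0 x1 y1 lt0 lt1.
have [z [x0z zy0 x1z zy1]] := independent_box Hind lt0 lt1.
have [vz | nvz] := eqVneq (v z) (Some z); last first.
  by exists z; split=> // /esym/eqP; rewrite (negPf nvz).
have [z' [zz'0 z'y0 zz'1 z'y1]] := independent_box Hind zy0 zy1.
exists z'; split=> //.
- move=> /esym vz'.
  by have := hamel_fixed_antitone Hv vz vz' zz'1; rewrite (slt_geF anti0 zz'0).
- exact: slt_trans anti0 trans0 x0z zz'0.
- exact: slt_trans anti1 trans1 x1z zz'1.
Qed.
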